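(* (i) Let $n \ge 4$ be even. For every $\xi \in \mathbb{H} \cap \mathbb{D}$ there exists an ordered sample $x_1 < \dots < x_n$ of reals whose relative position of the maximum likelihood estimate is $\xi$. (ii) Let $n \ge 3$ be odd. Then there exists $\epsilon_n > 0$ such that for every $\xi \in \mathbb{H} \cap B(i, \epsilon_n)$ there is no ordered sample $x_1 < \dots < x_n$ of reals whose relative position of the maximum likelihood estimate is $\xi$.
   Context: $\mathbb{H} = \{\theta\in\mathbb{C}:\Im\theta>0\}$, $\mathbb{D}$ is the open unit disc, and $B(i,\epsilon)$ is the open disc of center $i$ and radius $\epsilon$. For an ordered real sample $x_1<\dots<x_n$ ($n\ge3$), the Cauchy maximum likelihood estimate $\hat\theta$ is the unique maximizer over $\theta=\mu+i\sigma\in\mathbb{H}$ of $\prod_{j=1}^n \frac{\sigma}{\pi((x_j-\mu)^2+\sigma^2)}$; it satisfies $|\hat\theta - (x_1+x_n)/2| \le (x_n-x_1)/2$. The relative position of $\hat\theta$ is $\xi = \frac{2\hat\theta - (x_n + x_1)}{x_n - x_1} \in \mathbb{H}\cap\mathbb{D}$. *)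

(* concrete reals R. Complex numbers theta = mu + i sigma and
   xi = a + i b are represented by their real and imaginary parts. *)
From Stdlib Require Import Reals Lra Lia.
Open Scope R_scope.

(* Ordered sample x_1 < ... < x_n, indexed here as x 0 < ... < x (n-1). *)
Definition strictly_ordered (n : nat) (x : nat -> R) : Prop :=
  forall i : nat, (S i < n)%nat -> x i < x (S i).

Fixpoint cauchy_lik (x : nat -> R) (n : nat) (mu sigma : R) : R :=
  match n with
  | O => 1
  | S k => cauchy_lik x k mu sigma * (sigma / (PI * ((x k - mu) ^ 2 + sigma ^ 2)))
  end.

Definition is_cauchy_mle (n : nat) (x : nat -> R) (mu sigma : R) : Prop :=
  0 < sigma /\
  forall mu' sigma' : R, 0 < sigma' ->
    cauchy_lik x n mu' sigma' <= cauchy_lik x n mu sigma.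

(* xi = a + i b equals (2 theta - (x_n + x_1)) / (x_n - x_1). *)
Definition relative_position (n : nat) (x : nat -> R) (mu sigma a b : R) : Prop :=
  a = (2 * mu - (x (n - 1)%nat + x 0%nat)) / (x (n - 1)%nat - x 0%nat) /\
  b = (2 * sigma) / (x (n - 1)%nat - x 0%nat).

Definition mle_relative_position (n : nat) (x : nat -> R) (a b : R) : Prop :=
  exists mu sigma, is_cauchy_mle n x mu sigma /\ relative_position n x mu sigma a b.

From Stdlib Require Import Reals Lra Lia Psatz ZArith.
From Coquelicot Require Import Coquelicot.
Open Scope R_scope.

(* For two points u <> v and any theta = mu + i s in H,
     density(u) * density(v) <= 1 / (PI^2 (u - v)^2),
   with equality exactly when theta lies on the semicircle with diameter [u, v].
   Hence an even sample split into pairs whose semicircles all pass through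
   a + i b has a + i b as maximum likelihood estimate.  Taking -1, 1 as the
   outermost pair and a grid for the remaining left endpoints realises every
   xi in H /\ D.

   For odd n, the two score equations say that the n unit vectors
   (x_j - theta-bar)^2 / |x_j - theta|^2 sum to 0.  When xi is close to i,
   every |x_j - mu| is at most about sigma, so all their real parts are at most
   a small eta; summing to 0 then forces every real part to be small, hence
   every vector is close to i or -i, and an odd number of such vectors cannot
   sum to 0. *)

Definition cauchy_density (u mu sigma : R) : R :=
  sigma / (PI * ((u - mu) ^ 2 + sigma ^ 2)).

Lemma sum_sq_pos d s : 0 < s -> 0 < d ^ 2 + s ^ 2.
Proof. intros Hs. pose proof (pow2_ge_0 d). pose proof (pow_lt s 2 Hs). lra. Qed.

Lemma cauchy_density_pos u mu s : 0 < s -> 0 < cauchy_density u mu s.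
Proof.
  intros Hs. unfold cauchy_density. apply Rdiv_lt_0_compat; [lra|].
  apply Rmult_lt_0_compat; [apply PI_RGT_0 | apply sum_sq_pos; lra].
Qed.

Lemma cauchy_lik_succ x n mu s :
  cauchy_lik x (S n) mu s = cauchy_lik x n mu s * cauchy_density (x n) mu s.
Proof. reflexivity. Qed.

Lemma cauchy_lik_pos x n mu s : 0 < s -> 0 < cauchy_lik x n mu s.
Proof.
  intros Hs; induction n as [|n IH]; [simpl; lra|].
  rewrite cauchy_lik_succ.
  apply Rmult_lt_0_compat; [exact IH | apply (cauchy_density_pos _ _ _ Hs)].
Qed.

Lemma cauchy_lik_add x m k mu s :
  cauchy_lik x (m + k) mu s
  = cauchy_lik x m mu s * cauchy_lik (fun j => x (m + j)%nat) k mu s.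
Proof.
  induction k as [|k IH]; [simpl; rewrite Nat.add_0_r; ring|].
  rewrite Nat.add_succ_r, !cauchy_lik_succ, IH; ring.
Qed.

Lemma density_denominators_prod u v mu s :
  ((u - mu) ^ 2 + s ^ 2) * ((v - mu) ^ 2 + s ^ 2)
  = s ^ 2 * (u - v) ^ 2 + ((u - mu) * (v - mu) + s ^ 2) ^ 2.
Proof. ring. Qed.

Lemma cauchy_density_pair_le u v mu s : 0 < s -> u <> v ->
  cauchy_density u mu s * cauchy_density v mu s <= / (PI ^ 2 * (u - v) ^ 2).
Proof.
  intros Hs Huv. unfold cauchy_density.
  set (A := (u - mu) ^ 2 + s ^ 2); set (B := (v - mu) ^ 2 + s ^ 2).
  assert (HA : 0 < A) by (apply sum_sq_pos; lra).
  assert (HB : 0 < B) by (apply sum_sq_pos; lra).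
  assert (HPI := PI_RGT_0).
  assert (Huv2 : 0 < (u - v) ^ 2) by (apply pow2_gt_0; lra).
  assert (Hprod := density_denominators_prod u v mu s); fold A B in Hprod.
  assert (Hgap : / (PI ^ 2 * (u - v) ^ 2) - s / (PI * A) * (s / (PI * B))
                 = ((u - mu) * (v - mu) + s ^ 2) ^ 2 / (PI ^ 2 * (u - v) ^ 2 * (A * B))).
  { replace (((u - mu) * (v - mu) + s ^ 2) ^ 2) with (A * B - s ^ 2 * (u - v) ^ 2) by lra.
    field. lra. }
  assert (0 <= ((u - mu) * (v - mu) + s ^ 2) ^ 2 / (PI ^ 2 * (u - v) ^ 2 * (A * B))).
  { apply Rdiv_le_0_compat; [apply pow2_ge_0|]. apply Rmult_lt_0_compat; [|nra].
    apply Rmult_lt_0_compat; [apply pow_lt|]; lra. }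
  lra.
Qed.

Lemma cauchy_density_pair_eq u v a b : 0 < b -> (u - a) * (v - a) = - b ^ 2 ->
  cauchy_density u a b * cauchy_density v a b = / (PI ^ 2 * (u - v) ^ 2).
Proof.
  intros Hb Hp. unfold cauchy_density.
  assert (HPI := PI_RGT_0).
  assert (Hu := sum_sq_pos (u - a) b Hb); assert (Hv := sum_sq_pos (v - a) b Hb).
  assert (Huv : u - v <> 0).
  { intro E. replace v with u in Hp by lra. pose proof (pow2_ge_0 (u - a)). nra. }
  assert (Hprod := density_denominators_prod u v a b).
  rewrite Hp, Rplus_opp_l, pow_i, Rplus_0_r in Hprod by lia.
  replace (b / (PI * ((u - a) ^ 2 + b ^ 2)) * (b / (PI * ((v - a) ^ 2 + b ^ 2))))
    with (b ^ 2 / (PI ^ 2 * (((u - a) ^ 2 + b ^ 2) * ((v - a) ^ 2 + b ^ 2)))) by (field; lra).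
  rewrite Hprod. field. lra.
Qed.

Lemma cauchy_lik_pairs_le x y m mu s a b : 0 < s ->
  (forall j, (j < m)%nat ->
     cauchy_density (x j) mu s * cauchy_density (y j) mu s
     <= cauchy_density (x j) a b * cauchy_density (y j) a b) ->
  cauchy_lik x m mu s * cauchy_lik y m mu s <= cauchy_lik x m a b * cauchy_lik y m a b.
Proof.
  intros Hs Hpair; induction m as [|m IH]; [simpl; lra|].
  assert (Hswap : forall p q r t : R, p * q * (r * t) = p * r * (q * t)) by (intros; ring).
  rewrite !cauchy_lik_succ, (Hswap (cauchy_lik x m mu s)), (Hswap (cauchy_lik x m a b)).
  apply Rmult_le_compat.
  - apply Rmult_le_pos; left; apply cauchy_lik_pos; exact Hs.
  - apply Rmult_le_pos; left; apply cauchy_density_pos; exact Hs.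
  - apply IH; intros j Hj; apply Hpair; lia.
  - apply Hpair; lia.
Qed.

Lemma is_cauchy_mle_paired m x a b : 0 < b ->
  (forall j, (j < m)%nat -> (x j - a) * (x (m + j)%nat - a) = - b ^ 2) ->
  is_cauchy_mle (m + m) x a b.
Proof.
  intros Hb Hpairs. split; [exact Hb|]. intros mu s Hs.
  rewrite !cauchy_lik_add. apply cauchy_lik_pairs_le; [exact Hs|].
  intros j Hj. specialize (Hpairs j Hj).
  rewrite (cauchy_density_pair_eq _ _ _ _ Hb Hpairs).
  apply cauchy_density_pair_le; [exact Hs|].
  intro E. rewrite E in Hpairs. pose proof (pow2_ge_0 (x (m + j)%nat - a)). nra.
Qed.

Lemma strictly_ordered_le n x : strictly_ordered n x ->
  forall j k, (j <= k)%nat -> (k < n)%nat -> x j <= x k.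
Proof.
  intros Hx j k Hjk; induction Hjk as [|k Hjk IH]; intros Hk; [lra|].
  assert (x k < x (S k)) by (apply Hx; lia).
  assert (x j <= x k) by (apply IH; lia). lra.
Qed.

(* The v such that a + i b lies on the semicircle with diameter [u, v]. *)
Definition partner (a b u : R) : R := a - b ^ 2 / (u - a).

Lemma partner_spec a b u : u <> a -> (u - a) * (partner a b u - a) = - b ^ 2.
Proof. intros Hu. unfold partner. field. lra. Qed.

Lemma partner_involutive a b u : b <> 0 -> u <> a -> partner a b (partner a b u) = u.
Proof.
  intros Hb Hu. unfold partner.
  assert (b ^ 2 <> 0) by (apply pow_nonzero; exact Hb).
  replace (a - b ^ 2 / (u - a) - a) with (- (b ^ 2 / (u - a))) by ring.
  field. lra.
Qed.

Lemma partner_gt a b u : 0 < b -> u < a -> a < partner a b u.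
Proof.
  intros Hb Hu. unfold partner.
  assert (b ^ 2 / (a - u) > 0) by (apply Rdiv_lt_0_compat; [apply pow_lt|]; lra).
  replace (b ^ 2 / (u - a)) with (- (b ^ 2 / (a - u))) by (field; lra). lra.
Qed.

Lemma partner_lt_compat a b u v : 0 < b -> u < v < a -> partner a b u < partner a b v.
Proof.
  intros Hb [Huv Hva]. unfold partner.
  assert (b ^ 2 / (a - u) < b ^ 2 / (a - v)).
  { apply Rmult_lt_compat_l; [apply pow_lt; lra|]. apply Rinv_lt_contravar; nra. }
  replace (b ^ 2 / (u - a)) with (- (b ^ 2 / (a - u))) by (field; lra).
  replace (b ^ 2 / (v - a)) with (- (b ^ 2 / (a - v))) by (field; lra). lra.
Qed.

Definition paired_sample (a b : R) (m : nat) (l : nat -> R) (j : nat) : R :=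
  if (j <? m)%nat then l j else partner a b (l (j - m)%nat).

Lemma paired_sample_left a b m l j : (j < m)%nat -> paired_sample a b m l j = l j.
Proof. intros Hj. unfold paired_sample. destruct (Nat.ltb_spec j m); [reflexivity | lia]. Qed.

Lemma paired_sample_right a b m l j :
  paired_sample a b m l (m + j)%nat = partner a b (l j).
Proof.
  unfold paired_sample. destruct (Nat.ltb_spec (m + j) m); [lia|].
  replace (m + j - m)%nat with j by lia. reflexivity.
Qed.

Section PairedSample.

Variables (a b : R) (m : nat) (l : nat -> R).
Hypotheses (Hb : 0 < b) (Hl : strictly_ordered m l) (Hla : l (m - 1)%nat < a).

Lemma paired_sample_left_lt j : (j < m)%nat -> l j < a.
Proof.
  intros Hj. assert (l j <= l (m - 1)%nat) by (apply (strictly_ordered_le m l Hl); lia). lra.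
Qed.

Lemma paired_sample_ordered : strictly_ordered (m + m) (paired_sample a b m l).
Proof.
  intros i Hi.
  destruct (Nat.lt_ge_cases (S i) m) as [Hleft|Hright].
  - rewrite !paired_sample_left by lia. apply Hl; exact Hleft.
  - destruct (Nat.eq_dec (S i) m) as [Hmid|Hmid].
    + rewrite paired_sample_left by lia.
      replace (S i) with (m + 0)%nat by lia. rewrite paired_sample_right.
      assert (l i < a) by (apply paired_sample_left_lt; lia).
      assert (a < partner a b (l 0%nat))
        by (apply partner_gt; [exact Hb | apply paired_sample_left_lt; lia]).
      lra.
    + replace i with (m + (i - m))%nat by lia. rewrite <- Nat.add_succ_r.
      rewrite !paired_sample_right. apply partner_lt_compat; [exact Hb|]. split.
      * apply Hl; lia.
      * apply paired_sample_left_lt; lia.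
Qed.

Lemma paired_sample_mle : is_cauchy_mle (m + m) (paired_sample a b m l) a b.
Proof.
  apply is_cauchy_mle_paired; [exact Hb|]. intros j Hj.
  rewrite paired_sample_left, paired_sample_right by exact Hj.
  apply partner_spec. apply Rlt_not_eq, paired_sample_left_lt; exact Hj.
Qed.

End PairedSample.

Definition grid (p q : R) (m k : nat) : R := p + INR k * ((q - p) / INR (m - 1)).

Lemma grid_first p q m : grid p q m 0 = p.
Proof. unfold grid. simpl. ring. Qed.

Lemma grid_last p q m : (2 <= m)%nat -> grid p q m (m - 1) = q.
Proof.
  intros Hm. unfold grid.
  assert (0 < INR (m - 1)) by (apply lt_0_INR; lia).
  field. lra.
Qed.

Lemma grid_ordered p q m : p < q -> (2 <= m)%nat -> strictly_ordered m (grid p q m).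
Proof.
  intros Hpq Hm i _. unfold grid. rewrite S_INR.
  assert (0 < INR (m - 1)) by (apply lt_0_INR; lia).
  assert (0 < (q - p) / INR (m - 1)) by (apply Rdiv_lt_0_compat; lra).
  lra.
Qed.

Lemma mle_relative_position_even n : (4 <= n)%nat -> Nat.Even n ->
  forall a b : R, 0 < b -> a ^ 2 + b ^ 2 < 1 ->
  exists x : nat -> R, strictly_ordered n x /\ mle_relative_position n x a b.
Proof.
  intros Hn [m Hnm] a b Hb Hab. subst n.
  assert (Hm : (2 <= m)%nat) by lia.
  replace (2 * m)%nat with (m + m)%nat by lia.
  assert (Ha : -1 < a < 1) by (split; nra).
  set (s1 := partner a b 1).
  assert (Hs1 : -1 < s1 < a).
  { assert (b ^ 2 / (1 - a) < 1 + a).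
    { apply (Rmult_lt_reg_r (1 - a)); [lra|].
      replace (b ^ 2 / (1 - a) * (1 - a)) with (b ^ 2) by (field; lra). nra. }
    assert (0 < b ^ 2 / (1 - a)) by (apply Rdiv_lt_0_compat; [apply pow_lt|]; lra).
    unfold s1, partner. split; lra. }
  set (l := grid (-1) s1 m).
  assert (Hl : strictly_ordered m l) by (apply grid_ordered; [lra | exact Hm]).
  assert (Hla : l (m - 1)%nat < a) by (unfold l; rewrite grid_last by exact Hm; lra).
  exists (paired_sample a b m l). split; [apply paired_sample_ordered; assumption|].
  exists a, b. split; [apply paired_sample_mle; assumption|].
  assert (Hfirst : paired_sample a b m l 0 = -1).
  { rewrite paired_sample_left by lia. apply grid_first. }
  assert (Hlast : paired_sample a b m l (m + m - 1) = 1).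
  { replace (m + m - 1)%nat with (m + (m - 1))%nat by lia.
    rewrite paired_sample_right. unfold l. rewrite grid_last by exact Hm.
    apply partner_involutive; lra. }
  unfold relative_position. rewrite Hfirst, Hlast. split; field.
Qed.

Fixpoint sum_lt (f : nat -> R) (n : nat) : R :=
  match n with O => 0 | S k => sum_lt f k + f k end.

Lemma sum_lt_div f c n : sum_lt (fun j => f j / c) n = sum_lt f n / c.
Proof. induction n as [|n IH]; simpl; [unfold Rdiv; ring | rewrite IH; unfold Rdiv; ring]. Qed.

Lemma sum_lt_le f eta n : (forall j, (j < n)%nat -> f j <= eta) -> sum_lt f n <= INR n * eta.
Proof.
  induction n as [|n IH]; intros Hf; simpl sum_lt; [simpl; lra|].
  rewrite S_INR. assert (f n <= eta) by (apply Hf; lia).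
  assert (sum_lt f n <= INR n * eta) by (apply IH; intros; apply Hf; lia). lra.
Qed.

Lemma sum_lt_le_term f eta n : (forall j, (j < n)%nat -> f j <= eta) ->
  forall j, (j < n)%nat -> sum_lt f n <= f j + (INR n - 1) * eta.
Proof.
  induction n as [|n IH]; intros Hf j Hj; [lia|].
  simpl sum_lt. rewrite S_INR.
  assert (f n <= eta) by (apply Hf; lia).
  destruct (Nat.eq_dec j n) as [->|Hjn].
  - assert (sum_lt f n <= INR n * eta) by (apply sum_lt_le; intros; apply Hf; lia). lra.
  - assert (sum_lt f n <= f j + (INR n - 1) * eta) by (apply IH; [intros; apply Hf|]; lia).
    lra.
Qed.

(* Rounding every term to the nearer of +1 and -1 gives an integer sum with
   the parity of n. *)
Lemma sum_lt_near_signs f k n :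
  (forall j, (j < n)%nat -> Rabs (f j - 1) <= k \/ Rabs (f j + 1) <= k) ->
  exists z : Z, Rabs (sum_lt f n - IZR (2 * z + Z.of_nat n)) <= INR n * k.
Proof.
  induction n as [|n IH]; intros Hf.
  - exists 0%Z. simpl. rewrite Rminus_0_r, Rabs_R0. lra.
  - destruct IH as [z Hz]; [intros; apply Hf; lia|].
    simpl sum_lt. rewrite S_INR, Nat2Z.inj_succ.
    destruct (Hf n ltac:(lia)) as [Hplus|Hminus].
    + exists z.
      replace (2 * z + Z.succ (Z.of_nat n))%Z with (2 * z + Z.of_nat n + 1)%Z by lia.
      rewrite plus_IZR.
      replace (sum_lt f n + f n - (IZR (2 * z + Z.of_nat n) + 1))
        with ((sum_lt f n - IZR (2 * z + Z.of_nat n)) + (f n - 1)) by ring.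
      eapply Rle_trans; [apply Rabs_triang | lra].
    + exists (z - 1)%Z.
      replace (2 * (z - 1) + Z.succ (Z.of_nat n))%Z with (2 * z + Z.of_nat n - 1)%Z by lia.
      rewrite minus_IZR.
      replace (sum_lt f n + f n - (IZR (2 * z + Z.of_nat n) - 1))
        with ((sum_lt f n - IZR (2 * z + Z.of_nat n)) + (f n + 1)) by ring.
      eapply Rle_trans; [apply Rabs_triang | lra].
Qed.

Lemma odd_sum_near_signs_neq0 f k n : Nat.Odd n -> INR n * k < 1 ->
  (forall j, (j < n)%nat -> Rabs (f j - 1) <= k \/ Rabs (f j + 1) <= k) ->
  sum_lt f n <> 0.
Proof.
  intros [p Hp] Hk Hf Hsum.
  destruct (sum_lt_near_signs f k n Hf) as [z Hz].
  rewrite Hsum, Rminus_0_l, Rabs_Ropp in Hz.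
  assert (Hodd : (2 * z + Z.of_nat n = 2 * (z + Z.of_nat p) + 1)%Z) by lia.
  rewrite Hodd, <- abs_IZR in Hz.
  assert (Habs : (1 <= Z.abs (2 * (z + Z.of_nat p) + 1))%Z) by lia.
  apply IZR_le in Habs. lra.
Qed.

Lemma is_derive_prod_rec (F g : nat -> R -> R) (dlog : nat -> R) (t : R) :
  (forall u, F O u = 1) -> (forall k u, F (S k) u = F k u * g k u) ->
  (forall j, is_derive (g j) t (g j t * dlog j)) ->
  forall k, is_derive (F k) t (F k t * sum_lt dlog k).
Proof.
  intros F0 FS Dg k; induction k as [|k IH].
  - apply (is_derive_ext (fun _ => 1)); [intros; symmetry; apply F0|].
    simpl. rewrite Rmult_0_r. auto_derive; auto.
  - apply (is_derive_ext (fun u => F k u * g k u)); [intros; symmetry; apply FS|].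
    rewrite FS. simpl sum_lt.
    replace (F k t * g k t * (sum_lt dlog k + dlog k))
      with (F k t * sum_lt dlog k * g k t + F k t * (g k t * dlog k)) by ring.
    apply (is_derive_mult (F k) (g k)); [exact IH | apply Dg | intros; apply Rmult_comm].
Qed.

Lemma is_derive_interior_max f c l a b : is_derive f c l -> a < c < b ->
  (forall y, a < y < b -> f y <= f c) -> l = 0.
Proof.
  intros Df [Hac Hcb] Hmax. apply is_derive_Reals in Df.
  exact (deriv_maximum f a b c (exist _ l Df) Hac Hcb
           (fun y Hay Hyb => Hmax y (conj Hay Hyb))).
Qed.

(* (d + i s)^2 / |d + i s|^2 = score_sigma d s + i score_mu d s. *)
Definition score_mu (d s : R) : R := 2 * d * s / (d ^ 2 + s ^ 2).
Definition score_sigma (d s : R) : R := (d ^ 2 - s ^ 2) / (d ^ 2 + s ^ 2).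

Lemma score_unit d s : 0 < s -> score_mu d s ^ 2 + score_sigma d s ^ 2 = 1.
Proof. intros Hs. unfold score_mu, score_sigma. assert (H := sum_sq_pos d s Hs). field. lra. Qed.

Lemma is_derive_cauchy_density_mu u mu s : 0 < s ->
  is_derive (fun t => cauchy_density u t s) mu
    (cauchy_density u mu s * (score_mu (u - mu) s / s)).
Proof.
  intros Hs. assert (H := sum_sq_pos (u - mu) s Hs). assert (HPI := PI_RGT_0).
  unfold cauchy_density, score_mu. auto_derive.
  - apply Rgt_not_eq, Rmult_lt_0_compat; lra.
  - field. lra.
Qed.

Lemma is_derive_cauchy_density_sigma u mu s : 0 < s ->
  is_derive (fun t => cauchy_density u mu t) s
    (cauchy_density u mu s * (score_sigma (u - mu) s / s)).
Proof.
  intros Hs. assert (H := sum_sq_pos (u - mu) s Hs). assert (HPI := PI_RGT_0).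
  unfold cauchy_density, score_sigma. auto_derive.
  - apply Rgt_not_eq, Rmult_lt_0_compat; lra.
  - field. lra.
Qed.

Lemma mle_score_equations n x mu s : is_cauchy_mle n x mu s ->
  sum_lt (fun j => score_mu (x j - mu) s) n = 0 /\
  sum_lt (fun j => score_sigma (x j - mu) s) n = 0.
Proof.
  intros [Hs Hmax]. assert (Hlik := cauchy_lik_pos x n mu s Hs).
  assert (Hzero : forall l, cauchy_lik x n mu s * (l / s) = 0 -> l = 0).
  { intros l E. apply Rmult_integral in E. destruct E as [E|E]; [lra|].
    replace l with (l / s * s) by (field; lra). rewrite E; ring. }
  split; apply Hzero; rewrite <- sum_lt_div.
  - apply (is_derive_interior_max (fun t => cauchy_lik x n t s) mu _ (mu - 1) (mu + 1));
      [|lra | intros y _; apply Hmax, Hs].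
    apply (is_derive_prod_rec (fun k t => cauchy_lik x k t s)
             (fun k t => cauchy_density (x k) t s));
      [reflexivity | reflexivity | intros; apply is_derive_cauchy_density_mu, Hs].
  - apply (is_derive_interior_max (fun t => cauchy_lik x n mu t) s _ 0 (2 * s));
      [|lra | intros y Hy; apply Hmax; lra].
    apply (is_derive_prod_rec (fun k t => cauchy_lik x k mu t)
             (fun k t => cauchy_density (x k) mu t));
      [reflexivity | reflexivity | intros; apply is_derive_cauchy_density_sigma, Hs].
Qed.

Lemma near_sign_of_unit r m k : r ^ 2 + m ^ 2 = 1 -> r ^ 2 <= k ->
  Rabs (m - 1) <= k \/ Rabs (m + 1) <= k.
Proof.
  intros Hunit Hr. pose proof (pow2_ge_0 r).
  destruct (Rle_lt_dec 0 m) as [Hm|Hm].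
  - left. assert (m <= 1) by nra. rewrite Rabs_left1 by lra. nra.
  - right. assert (-1 <= m) by nra. rewrite Rabs_right by lra. nra.
Qed.

Lemma odd_unit_vectors_unbalanced (r m : nat -> R) eta n :
  Nat.Odd n -> (2 <= n)%nat -> INR n * ((INR n - 1) * eta) ^ 2 < 1 ->
  (forall j, (j < n)%nat -> r j ^ 2 + m j ^ 2 = 1) ->
  (forall j, (j < n)%nat -> r j <= eta) ->
  sum_lt r n = 0 -> sum_lt m n <> 0.
Proof.
  intros Hodd Hn Hsmall Hunit Hr Hsum.
  set (rho := (INR n - 1) * eta) in Hsmall.
  assert (HN : 2 <= INR n) by (replace 2 with (INR 2) by reflexivity; apply le_INR; exact Hn).
  assert (Heta : 0 <= eta).
  { pose proof (sum_lt_le r eta n Hr) as Hle. rewrite Hsum in Hle. nra. }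
  apply (odd_sum_near_signs_neq0 m (rho ^ 2) n Hodd Hsmall).
  intros j Hj. apply (near_sign_of_unit (r j)); [apply Hunit, Hj|].
  pose proof (sum_lt_le_term r eta n Hr j Hj) as Hlow. rewrite Hsum in Hlow.
  assert (r j <= eta) by (apply Hr, Hj).
  assert (eta <= rho) by (unfold rho; nra).
  assert (0 <= (rho - r j) * (rho + r j)) by (apply Rmult_le_pos; unfold rho in *; lra).
  nra.
Qed.

Lemma score_sigma_le_ratio d s D S : 0 < S -> d ^ 2 <= D -> S <= s ^ 2 ->
  score_sigma d s <= (D - S) / (D + S).
Proof.
  intros HS Hd Hs. pose proof (pow2_ge_0 d). unfold score_sigma.
  apply (Rmult_le_reg_r ((d ^ 2 + s ^ 2) * (D + S))); [nra|].
  replace ((d ^ 2 - s ^ 2) / (d ^ 2 + s ^ 2) * ((d ^ 2 + s ^ 2) * (D + S)))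
    with ((d ^ 2 - s ^ 2) * (D + S)) by (field; lra).
  replace ((D - S) / (D + S) * ((d ^ 2 + s ^ 2) * (D + S)))
    with ((D - S) * (d ^ 2 + s ^ 2)) by (field; lra).
  nra.
Qed.

Lemma score_sigma_le_near_center c h e u mu s :
  0 < h -> 0 < e < 1 -> Rabs (u - c) <= h -> Rabs (mu - c) <= e * h -> (1 - e) * h <= s ->
  score_sigma (u - mu) s <= 2 * e.
Proof.
  intros Hh He Hu Hmu Hs.
  assert (Hd : Rabs (u - mu) <= (1 + e) * h).
  { replace (u - mu) with ((u - c) + - (mu - c)) by ring.
    eapply Rle_trans; [apply Rabs_triang | rewrite Rabs_Ropp; lra]. }
  assert (Hd2 : (u - mu) ^ 2 <= ((1 + e) * h) ^ 2).
  { rewrite <- pow2_abs. apply pow_incr. split; [apply Rabs_pos | exact Hd]. }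
  assert (Hs2 : ((1 - e) * h) ^ 2 <= s ^ 2) by (apply pow_incr; nra).
  assert (HS : 0 < ((1 - e) * h) ^ 2) by (apply pow_lt, Rmult_lt_0_compat; lra).
  apply (Rle_trans _ _ _ (score_sigma_le_ratio _ _ _ _ HS Hd2 Hs2)).
  replace ((((1 + e) * h) ^ 2 - ((1 - e) * h) ^ 2)
           / (((1 + e) * h) ^ 2 + ((1 - e) * h) ^ 2))
    with (2 * e / (1 + e ^ 2)) by (field; nra).
  apply (Rmult_le_reg_r (1 + e ^ 2)); [nra|].
  replace (2 * e / (1 + e ^ 2) * (1 + e ^ 2)) with (2 * e) by (field; nra). nra.
Qed.

Lemma sample_score_sigma_bound n x mu s a b e :
  (2 <= n)%nat -> strictly_ordered n x -> relative_position n x mu s a b ->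
  0 < e < 1 -> Rabs a <= e -> 1 - e <= b ->
  forall j, (j < n)%nat -> score_sigma (x j - mu) s <= 2 * e.
Proof.
  intros Hn Hx [Ha Hb] He Hae Hbe j Hj.
  set (lo := x 0%nat) in *; set (hi := x (n - 1)%nat) in *.
  assert (Hlo : lo <= x j) by (apply (strictly_ordered_le n x Hx); lia).
  assert (Hhi : x j <= hi) by (apply (strictly_ordered_le n x Hx); lia).
  assert (Hspread : lo < hi).
  { assert (lo < x 1%nat) by (apply Hx; lia).
    assert (x 1%nat <= hi) by (apply (strictly_ordered_le n x Hx); lia). lra. }
  set (c := (lo + hi) / 2); set (h := (hi - lo) / 2).
  assert (Hmu : mu - c = a * h) by (rewrite Ha; unfold c, h; field; lra).
  assert (Hs : s = b * h) by (rewrite Hb; unfold h; field; lra).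
  apply (score_sigma_le_near_center c h); [unfold h; lra | exact He | | |].
  - apply Rabs_le. unfold c, h. lra.
  - rewrite Hmu, Rabs_mult, (Rabs_right h) by (unfold h; lra).
    apply Rmult_le_compat_r; [unfold h; lra | exact Hae].
  - rewrite Hs. apply Rmult_le_compat_r; [unfold h; lra | exact Hbe].
Qed.

Lemma abs_le_of_sq_lt x e : 0 < e -> x ^ 2 < e ^ 2 -> Rabs x <= e.
Proof. intros He Hx. apply Rabs_le. split; nra. Qed.

Lemma mle_relative_position_odd n : (3 <= n)%nat -> Nat.Odd n ->
  exists eps : R, 0 < eps /\
    forall a b : R, 0 < b -> a ^ 2 + (b - 1) ^ 2 < eps ^ 2 ->
      ~ (exists x : nat -> R, strictly_ordered n x /\ mle_relative_position n x a b).
Proof.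
  intros Hn Hodd.
  assert (HN : 3 <= INR n) by (replace 3 with (INR 3) by (simpl; ring); apply le_INR; exact Hn).
  (* 2 e = 1 / n^2 is the bound eta on the sigma-scores; it makes n ((n - 1) eta)^2 < 1. *)
  set (e := / (2 * INR n ^ 2)).
  assert (He : 0 < e < 1).
  { unfold e. split; [apply Rinv_0_lt_compat; nra|].
    rewrite <- Rinv_1. apply Rinv_lt_contravar; nra. }
  exists e. split; [lra|].
  intros a b Hb Hab [x [Hx [mu [s [Hmle Hrel]]]]].
  pose proof (pow2_ge_0 a); pose proof (pow2_ge_0 (b - 1)).
  assert (Hae : Rabs a <= e) by (apply abs_le_of_sq_lt; lra).
  assert (Hbe : 1 - e <= b).
  { assert (Hb1 : Rabs (b - 1) <= e) by (apply abs_le_of_sq_lt; lra).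
    apply Rabs_le_between in Hb1. lra. }
  destruct (mle_score_equations n x mu s Hmle) as [Smu Ssigma].
  apply (odd_unit_vectors_unbalanced (fun j => score_sigma (x j - mu) s)
           (fun j => score_mu (x j - mu) s) (2 * e) n Hodd); [lia | | | | exact Ssigma | exact Smu].
  - unfold e. replace (2 * / (2 * INR n ^ 2)) with (/ INR n ^ 2) by (field; lra).
    apply (Rmult_lt_reg_r (INR n ^ 3)); [apply pow_lt; lra|].
    replace (INR n * ((INR n - 1) * / INR n ^ 2) ^ 2 * INR n ^ 3) with ((INR n - 1) ^ 2)
      by (field; lra).
    nra.
  - intros j _. rewrite Rplus_comm. apply score_unit, (proj1 Hmle).
  - apply (sample_score_sigma_bound n x mu s a b e);
      [lia | exact Hx | exact Hrel | exact He | exact Hae | exact Hbe].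
Qed.

Theorem mainTheorem11 :
  (forall n : nat, (4 <= n)%nat -> Nat.Even n ->
     forall a b : R, 0 < b -> a ^ 2 + b ^ 2 < 1 ->
       exists x : nat -> R, strictly_ordered n x /\ mle_relative_position n x a b)
  /\
  (forall n : nat, (3 <= n)%nat -> Nat.Odd n ->
     exists eps : R, 0 < eps /\
       forall a b : R, 0 < b -> a ^ 2 + (b - 1) ^ 2 < eps ^ 2 ->
         ~ (exists x : nat -> R, strictly_ordered n x /\ mle_relative_position n x a b)).
Proof. split; [exact mle_relative_position_even | exact mle_relative_position_odd]. Qed.
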